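(* There exists an absolute constant $C>0$ such that the following holds. Let $\varepsilon>0$, let $t\geq1$ be an integer, and let $n\geq 2^{Ct/\varepsilon^{16}}$. Then every locally $\varepsilon$-balanced $2$-edge-coloured (red/blue) $K_n$ contains one of the following: (i) two disjoint vertex sets $A,B$ of size $t$ such that, for some colour $c$, all edges inside $A$ and inside $B$ have colour $c$ and all edges between $A$ and $B$ have the other colour; (ii) four disjoint vertex sets $V_1,V_2,V_3,V_4$ of size $t$ such that all edges inside $V_1$, inside $V_4$, between $V_1$ and $V_3$, between $V_1$ and $V_4$, and between $V_2$ and $V_4$ are red, while all edges inside $V_2$, inside $V_3$, between $V_1$ and $V_2$, between $V_2$ and $V_3$, and between $V_3$ and $V_4$ are blue.
   Context: A $2$-edge-coloured $K_n$ is called locally $\varepsilon$-balanced if every vertex is incident to at least $\varepsilon n$ red edges and at least $\varepsilon n$ blue edges. *)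

From mathcomp Require Import all_boot.
From Stdlib Require Import Reals.

Set Implicit Arguments.
Unset Strict Implicit.
Unset Printing Implicit Defensive.

(* A 2-edge-colouring of K_n on vertex set 'I_n: col x y = true means the edge
   xy is red, false means blue.  Only values at x <> y matter; we require
   symmetry so that it is a colouring of undirected edges. *)
Definition colouring_sym (n : nat) (col : 'I_n -> 'I_n -> bool) : Prop :=
  forall x y : 'I_n, x != y -> col x y = col y x.

Definition cdeg (n : nat) (col : 'I_n -> 'I_n -> bool) (b : bool) (v : 'I_n) : nat :=
  #|[set u : 'I_n | (u != v) && (col v u == b)]|.

Definition locally_balanced (n : nat) (col : 'I_n -> 'I_n -> bool) (eps : R) : Prop :=
  forall v : 'I_n,
    (eps * INR n <= INR (cdeg col true v))%R /\
    (eps * INR n <= INR (cdeg col false v))%R.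

Definition mono_in (n : nat) (col : 'I_n -> 'I_n -> bool) (A : {set 'I_n}) (b : bool) : Prop :=
  forall x y, x \in A -> y \in A -> x != y -> col x y = b.

Definition mono_between (n : nat) (col : 'I_n -> 'I_n -> bool) (A B : {set 'I_n}) (b : bool) : Prop :=
  forall x y, x \in A -> y \in B -> col x y = b.

Definition outcome_i (n t : nat) (col : 'I_n -> 'I_n -> bool) : Prop :=
  exists (A B : {set 'I_n}) (c : bool),
    [/\ #|A| = t, #|B| = t & [disjoint A & B] ] /\
    [/\ mono_in col A c, mono_in col B c & mono_between col A B (~~ c)].

Definition outcome_ii (n t : nat) (col : 'I_n -> 'I_n -> bool) : Prop :=
  exists V1 V2 V3 V4 : {set 'I_n},
    [/\ #|V1| = t, #|V2| = t, #|V3| = t & #|V4| = t] /\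
    [/\ ([disjoint V1 & V2]), ([disjoint V1 & V3]) & ([disjoint V1 & V4])] /\
    [/\ ([disjoint V2 & V3]), ([disjoint V2 & V4]) & ([disjoint V3 & V4])] /\
    [/\ mono_in col V1 true, mono_in col V4 true, mono_between col V1 V3 true,
        mono_between col V1 V4 true & mono_between col V2 V4 true] /\
    [/\ mono_in col V2 false, mono_in col V3 false, mono_between col V1 V2 false,
        mono_between col V2 V3 false & mono_between col V3 V4 false].

(* Let K be about 1 / eps, so that every vertex has at least n / K neighbours in
   each colour, and let s = 1024 K^6 t.  By Ramsey's theorem there is a
   monochromatic s-set A0 among the vertices that have fewer than n / 2K^2 vertices
   of larger red degree.  If b has red degree at most that of a, the identity
   deg a + codeg b a = deg b + codeg a b gives codeg a b >= codeg b a, where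
   codeg a b counts red neighbours of a that are blue neighbours of b; since
   codeg . a sums to at least n^2 / K^2, about n / K^2 vertices b have both
   codegrees of order n / K^2.  Dependent random choice, pigeonholing over the
   traces on A0 and Ramsey's theorem then give monochromatic sets A and B of
   size at least t, a set P of common red neighbours of A that are blue
   neighbours of B and a set Q with the colours swapped, all monochromatic,
   and A, B as well as P, Q monochromatically joined.  Among four such sets,
   either two form outcome (i) or all four form outcome (ii). *)

From mathcomp Require Import all_boot zify.
From Stdlib Require Import Reals Lra ZArith.
(* Reals re-exports Stdlib's notations on [nat]; restore those of ssrnat. *)
Import ssrnat.

Set Implicit Arguments.
Unset Strict Implicit.
Unset Printing Implicit Defensive.
Local Open Scope nat_scope.

Lemma leq_pmul_bound a b x m : 0 < a -> a * b <= m -> m <= a * x -> b <= x.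
Proof. by move=> a0 le_abm le_max; rewrite -(leq_pmul2l a0) (leq_trans le_abm). Qed.

Lemma exp_budget K s : 16 * K ^ 2 <= s ->
  4 * (4 * K ^ 2) * (4 ^ s * 4 ^ s * 4 ^ s) <= 2 ^ (7 * s).
Proof.
move=> le_s; have lt_s := ltn_expl s (ltnSn 1).
have -> : 4 ^ s = 2 ^ s * 2 ^ s by rewrite -expnMn.
have -> : 2 ^ (7 * s) = 2 ^ s * (2 ^ s * 2 ^ s * (2 ^ s * 2 ^ s) * (2 ^ s * 2 ^ s)).
  by rewrite -!expnD; congr (2 ^ _); lia.
set e := 2 ^ s; have le_e : 16 * K ^ 2 <= e := ltnW (leq_ltn_trans le_s lt_s).
by have := leq_mul le_e (leqnn (e * e * (e * e) * (e * e))); lia.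
Qed.

Section FiniteCounting.
Variable T : finType.
Implicit Types (S X Y : {set T}).

Lemma exists_subset_card X k : k <= #|X| -> exists2 Y : {set T}, Y \subset X & #|Y| = k.
Proof.
elim: k => [|k IH] hk; first by exists set0; rewrite ?sub0set ?cards0.
have [Y sYX cY] := IH (ltnW hk).
have /properP[_ [x xX xY]] : Y \proper X by rewrite properEcard sYX cY.
by exists (x |: Y); rewrite ?subUset ?sub1set ?xX ?sYX // cardsU1 xY cY.
Qed.

Lemma card_sum_bool S (P : pred T) : #|[set x in S | P x]| = \sum_(x in S) P x.
Proof.
rewrite -sum1_card big_mkcond [RHS]big_mkcond /=.
by apply: eq_bigr => x _; rewrite inE; case: (x \in S); case: (P x).
Qed.

Lemma exists_large_fiber (U : finType) (I : {set U}) (g : T -> U) (y0 : U) S :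
  {in S, forall x, g x \in I} ->
  exists y, #|S| <= #|I| * #|[set x in S | g x == y]|.
Proof.
move=> gSI.
have -> : #|S| = \sum_(y in I) #|[set x in S | g x == y]|.
  rewrite -sum1_card (partition_big g (mem I)) //=.
  by apply: eq_bigr => y _; rewrite -sum1_card; apply: eq_bigl => x; rewrite inE.
have [I0 | [y1 y1I]] := set_0Vmem I; first by exists y0; rewrite I0 big_set0.
have [y _ ymax] := @arg_maxnP _ y1 (mem I) (fun y => #|[set x in S | g x == y]|) y1I.
by exists y; rewrite -sum_nat_const; apply: leq_sum => z /ymax.
Qed.

Lemma reverse_markov S (w : T -> nat) M D m : 0 < M ->
  {in S, forall x, w x <= M} -> M * m <= D * \sum_(x in S) w x ->
  2 * m <= #|S| + 2 * D * #|[set x in S | M <= 2 * D * w x]|.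
Proof.
move=> M0 wM hm; set H := [set x in S | _].
have low : 2 * D * \sum_(x in S :\: H) w x <= M * #|S|.
  rewrite big_distrr /=.
  apply: (@leq_trans (\sum_(x in S :\: H) M)); last first.
    by rewrite sum_nat_const mulnC leq_mul2l subset_leq_card ?subsetDl ?orbT.
  apply: leq_sum => x; rewrite !inE => /andP[+ xS].
  by rewrite xS -ltnNge => /ltnW.
have high : \sum_(x in S :&: H) w x <= M * #|H|.
  have sHS : H \subset S by apply/subsetP => x; rewrite inE => /andP[].
  rewrite mulnC -sum_nat_const (setIidPr sHS).
  by apply: leq_sum => x; rewrite inE => /andP[/wM].
rewrite -(leq_pmul2l M0); move: hm; rewrite (big_setID H) /=; nia.
Qed.

Lemma exists_majority S (P : pred T) :
  exists (X : {set T}) (c : bool), [/\ X \subset S, #|S| <= 2 * #|X| & {in X, forall x, P x = c}].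
Proof.
have := cardsID [set x | P x] S.
have [le_DI | lt_ID] := leqP #|S :\: [set x | P x]| #|S :&: [set x | P x]| => cardS.
  exists (S :&: [set x | P x]), true; split; rewrite ?subsetIl //; first lia.
  by move=> x; rewrite !inE => /andP[].
exists (S :\: [set x | P x]), false; split; rewrite ?subsetDl //; first lia.
by move=> x; rewrite !inE => /andP[/negbTE].
Qed.

Lemma card_few_above (f : T -> nat) c : 0 < c ->
  #|T| <= c * #|[set a | c * #|[set b | f a < f b]| < #|T|]|.
Proof.
move=> c0; set F := [set a | _].
have [FT | [a0 a0F]] := set_0Vmem (~: F).
  by rewrite -(setCK F) FT setC0 cardsT leq_pmull.
have [a aF amax] := @arg_maxnP _ a0 (mem (~: F)) f a0F.
have above_a : [set b | f a < f b] \subset F.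
  apply/subsetP => b; rewrite inE => ltab; apply/negPn/negP; rewrite -in_setC.
  by move=> /amax /=; rewrite leqNgt ltab.
move: aF; rewrite !inE -leqNgt => /leq_trans; apply.
by rewrite leq_mul2l subset_leq_card ?orbT.
Qed.

Lemma card_setI_sum (A B : {set T}) : #|A :&: B| = \sum_x ((x \in A) * (x \in B)).
Proof.
rewrite -sum1_card big_mkcond /=.
by apply: eq_bigr => x _; rewrite inE; case: (x \in A); case: (x \in B).
Qed.

(* Dependent random choice: average over [z] the number of pairs [(x, y)] with
   [z \in E1 x :&: E2 y], then fix the traces of [z] on [X] and [Y] by pigeonhole. *)
Lemma common_nbhd (E1 E2 : T -> {set T}) D X Y :
  0 < #|X| -> 0 < #|Y| -> {in X & Y, forall x y, #|T| <= D * #|E1 x :&: E2 y|} ->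
  exists (Z X' Y' : {set T}),
    [/\ X' \subset X, Y' \subset Y, #|X| <= 2 * D * #|X'| & #|Y| <= 2 * D * #|Y'|] /\
    #|T| <= 2 * D * (2 ^ #|X| * 2 ^ #|Y| * #|Z|) /\
    {in Z & X', forall z x, z \in E1 x} /\ {in Z & Y', forall z y, z \in E2 y}.
Proof.
move=> X0 Y0 hXY.
pose tr z := ([set x in X | z \in E1 x], [set y in Y | z \in E2 y]).
pose w z := #|(tr z).1| * #|(tr z).2|.
have trX z : (tr z).1 \subset X by apply/subsetP => x; rewrite inE => /andP[].
have trY z : (tr z).2 \subset Y by apply/subsetP => y; rewrite inE => /andP[].
have wM : {in setT, forall z, w z <= #|X| * #|Y|}.
  by move=> z _; rewrite leq_mul ?subset_leq_card.
have sum_w : #|X| * #|Y| * #|T| <= D * \sum_(z in setT) w z.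
  have -> : \sum_(z in setT) w z = \sum_(x in X) \sum_(y in Y) #|E1 x :&: E2 y|.
    rewrite (eq_bigr (fun z => \sum_(x in X) \sum_(y in Y) ((z \in E1 x) * (z \in E2 y)))).
      rewrite (eq_bigl predT) => [|z]; last by rewrite inE.
      rewrite exchange_big; apply: eq_bigr => x _.
      by rewrite exchange_big; apply: eq_bigr => y _; rewrite card_setI_sum.
    move=> z _; rewrite /w !card_sum_bool big_distrl /=.
    by apply: eq_bigr => x _; rewrite big_distrr.
  rewrite -mulnA -!sum_nat_const big_distrr; apply: leq_sum => x xX.
  by rewrite big_distrr; apply: leq_sum => y yY; apply: hXY.
have XY0 : 0 < #|X| * #|Y| by rewrite muln_gt0 X0 Y0.
have := reverse_markov XY0 wM sum_w; rewrite cardsT.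
set Pc := [set z in setT | _] => bigPc.
have trP : {in Pc, forall z, tr z \in setX (powerset X) (powerset Y)}.
  by move=> z _; rewrite in_setX !powersetE trX trY.
have [t0] := exists_large_fiber (set0, set0) trP.
rewrite cardsX !card_powerset; set Cl := [set z in Pc | _] => bigCl.
have bigT : #|T| <= 2 * D * (2 ^ #|X| * 2 ^ #|Y| * #|Cl|).
  by apply: (leq_trans _ (leq_mul (leqnn (2 * D)) bigCl)); lia.
have T0 : 0 < #|T| by apply: leq_trans X0 (max_card _).
have /card_gt0P[z0 z0Cl] : 0 < #|Cl|.
  by rewrite lt0n; apply: contraTneq T0 => Cl0; rewrite -leqNgt (leq_trans bigT) // Cl0 !muln0.
have trCl z : z \in Cl -> tr z = tr z0.
  by rewrite !inE => /andP[_ /eqP->]; move: z0Cl; rewrite !inE => /andP[_ /eqP->].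
have : #|X| * #|Y| <= 2 * D * w z0 by move: z0Cl; rewrite !inE => /andP[].
rewrite /w; set X' := (tr z0).1; set Y' := (tr z0).2 => wz0.
have cX' : #|X'| <= #|X| by exact/subset_leq_card/trX.
have cY' : #|Y'| <= #|Y| by exact/subset_leq_card/trY.
exists Cl, X', Y'; split; [split; [exact: trX | exact: trY | |] | split; [|split]] => //.
- rewrite -(leq_pmul2r Y0); apply: leq_trans wz0 _.
  by have := leq_mul (leqnn (2 * D * #|X'|)) cY'; lia.
- rewrite -(leq_pmul2l X0); apply: leq_trans wz0 _.
  by have := leq_mul cX' (leqnn (2 * D * #|Y'|)); lia.
- by move=> z x zCl; rewrite /X' -(trCl z zCl) inE => /andP[].
- by move=> z y zCl; rewrite /Y' -(trCl z zCl) inE => /andP[].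
Qed.

Lemma exists_mono_rectangle (f : T -> T -> bool) (P Q : {set T}) :
  exists (P' Q' : {set T}) (c : bool),
    [/\ P' \subset P, Q' \subset Q, #|P| <= 2 * #|P'|, #|Q| <= 2 ^ #|P| * #|Q'|
      & {in P' & Q', forall p q, f p q = c}].
Proof.
pose tr q := [set p in P | f p q].
have trP : {in Q, forall q, tr q \in powerset P}.
  by move=> q _; rewrite powersetE; apply/subsetP => p; rewrite inE => /andP[].
have [Y] := exists_large_fiber set0 trP; rewrite card_powerset => bigQ'.
have [P' [c [sP'P bigP' P'c]]] := exists_majority P (mem Y).
exists P', [set q in Q | tr q == Y], c; split=> //.
  by apply/subsetP => q; rewrite inE => /andP[].
move=> p q pP'; rewrite inE => /andP[_ /eqP trqY].
by rewrite -(P'c p pP') /= -trqY inE (subsetP sP'P p pP').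
Qed.

End FiniteCounting.

Section Colouring.
Variables (n : nat) (col : 'I_n -> 'I_n -> bool).
Hypothesis col_sym : colouring_sym col.
Implicit Types (S X Y : {set 'I_n}) (c : bool).

Definition nbhd c v := [set u | (u != v) && (col v u == c)].

Definition codeg a b := #|nbhd true a :&: nbhd false b|.

Lemma nbhdC c u v : (u \in nbhd c v) = (v \in nbhd c u).
Proof. by rewrite !inE eq_sym; case: eqVneq => //= uv; rewrite col_sym // eq_sym. Qed.

Lemma col_nbhd c u v : u \in nbhd c v -> col v u = c.
Proof. by rewrite inE => /andP[_ /eqP]. Qed.

Lemma neq_nbhd c u v : u \in nbhd c v -> u != v.
Proof. by rewrite inE => /andP[]. Qed.

Lemma cdeg_codeg a b : cdeg col true a + codeg b a = cdeg col true b + codeg a b.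
Proof.
rewrite /cdeg /codeg -(cardsID (nbhd false b) (nbhd true a)).
rewrite -(cardsID (nbhd false a) (nbhd true b)).
suff -> : #|nbhd true a :\: nbhd false b| = #|nbhd true b :\: nbhd false a| by lia.
rewrite (cardsD1 b) [RHS](cardsD1 a); congr (_ + _).
  rewrite !inE !eqxx /=; case: (eqVneq b a) => [-> | ba] //=.
  by rewrite col_sym // eq_sym.
apply: eq_card => u; rewrite !inE.
by case: (u =P b); case: (u =P a); case: (col a u); case: (col b u).
Qed.

Lemma sum_codeg a : \sum_b codeg b a = \sum_(u in nbhd false a) cdeg col true u.
Proof.
under eq_bigr => b _ do rewrite /codeg card_setI_sum.
rewrite exchange_big /= (bigID (mem (nbhd false a))) /=.
rewrite [X in _ + X]big1 ?addn0 => [|u /negbTE uN]; last first.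
  by apply: big1 => b _; rewrite uN muln0.
apply: eq_bigr => u uN; rewrite /cdeg -sum1_card [RHS]big_mkcond /=.
by apply: eq_bigr => b _; rewrite uN muln1 nbhdC !inE; case: (_ && _).
Qed.

Lemma mono_in_subset X Y c : X \subset Y -> mono_in col Y c -> mono_in col X c.
Proof. by move=> /subsetP sXY monoY x y /sXY xY /sXY; apply: monoY. Qed.

Lemma mono_between_subset X X' Y Y' c : X' \subset X -> Y' \subset Y ->
  mono_between col X Y c -> mono_between col X' Y' c.
Proof. by move=> /subsetP sX /subsetP sY monoXY x y /sX xX /sY; apply: monoXY. Qed.

Lemma mono_between_sym X Y c : [disjoint X & Y] ->
  mono_between col X Y c -> mono_between col Y X c.
Proof.
move=> dXY monoXY y x yY xX; rewrite col_sym ?monoXY //.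
by apply: contraTneq yY => ->; rewrite (disjointFr dXY xX).
Qed.

Lemma mono_in_setU1 X v c : mono_in col X c -> {in X, forall x, x \in nbhd c v} ->
  mono_in col (v |: X) c.
Proof.
move=> monoX vX x y; rewrite !inE => /predU1P[-> | xX] /predU1P[-> | yX].
- by rewrite eqxx.
- by move=> _; apply/col_nbhd/vX.
- by move=> xv; rewrite col_sym //; apply/col_nbhd/vX.
- exact: monoX.
Qed.

Lemma ramsey_bound a b S : 2 ^ (a + b) <= #|S| ->
  (exists2 X : {set 'I_n}, X \subset S & #|X| = a /\ mono_in col X true) \/
  (exists2 X : {set 'I_n}, X \subset S & #|X| = b /\ mono_in col X false).
Proof.
have mono0 c : mono_in col set0 c by move=> x y; rewrite inE.
elim: {a b}(a + b) {-2}a {-2}b (erefl (a + b)) S => [|k IH] [|a] [|b] //= eqk S bigS.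
- by left; exists set0; rewrite ?sub0set ?cards0.
- by left; exists set0; rewrite ?sub0set ?cards0.
- by right; exists set0; rewrite ?sub0set ?cards0.
have /card_gt0P[v vS] : 0 < #|S| by apply: leq_trans bigS; rewrite expn_gt0.
pose R := S :&: nbhd true v; pose B := S :&: nbhd false v.
have sRS : R \subset S by apply: subsetIl.
have sBS : B \subset S by apply: subsetIl.
have cardRB : #|S| <= (#|R| + #|B|).+1.
  rewrite -cardsUI (cardsD1 v S) vS add1n ltnS.
  suff -> : (S :\ v) = R :|: B by apply: leq_addr.
  apply/setP => u; rewrite !inE.
  by case: (u \in S); case: (u == v); case: (col v u).
have notv X c : X \subset S :&: nbhd c v -> v \notin X.
  by move=> /subsetP sX; apply/negP => /sX; rewrite !inE eqxx andbF.
have [bigR | bigB] := leqP (2 ^ (a + b.+1)) #|R|.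
  have [[X sXR [cX monoX]] | [X sXR [cX monoX]]] := IH a b.+1 ltac:(lia) R bigR.
    left; exists (v |: X); first by rewrite subUset sub1set vS (subset_trans sXR).
    split; first by rewrite cardsU1 (notv _ _ sXR) cX.
    by apply: mono_in_setU1 => // x /(subsetP sXR); rewrite inE => /andP[].
  by right; exists X; first exact: subset_trans sXR sRS.
have {}bigB : 2 ^ (a.+1 + b) <= #|B|.
  move: bigS bigB cardRB; rewrite !addSn !addnS !expnS.
  (* Naming the cardinals makes their occurrences identical atoms for [lia]. *)
  by set r := #|R|; set s := #|S|; set bb := #|B|; lia.
have [[X sXB [cX monoX]] | [X sXB [cX monoX]]] := IH a.+1 b ltac:(lia) B bigB.
  by left; exists X; first exact: subset_trans sXB sBS.
right; exists (v |: X); first by rewrite subUset sub1set vS (subset_trans sXB).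
split; first by rewrite cardsU1 (notv _ _ sXB) cX.
by apply: mono_in_setU1 => // x /(subsetP sXB); rewrite inE => /andP[].
Qed.

Lemma ramsey s S : 4 ^ s <= #|S| ->
  exists (X : {set 'I_n}) c, [/\ X \subset S, #|X| = s & mono_in col X c].
Proof.
rewrite -[4]/(2 ^ 2) -expnM mul2n -addnn => /ramsey_bound[] [X sXS [cX monoX]].
  by exists X, true.
by exists X, false.
Qed.

Lemma disjoint_of_neq X Y : {in X & Y, forall x y, x != y} -> [disjoint X & Y].
Proof.
move=> neqXY; rewrite disjoint_subset; apply/subsetP => x xX; rewrite inE.
by apply/negP => xY; have := neqXY x x xX xY; rewrite eqxx.
Qed.

Lemma outcome_i_of_sets t X Y c : t <= #|X| -> t <= #|Y| -> [disjoint X & Y] ->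
  mono_in col X c -> mono_in col Y c -> mono_between col X Y (~~ c) -> outcome_i t col.
Proof.
move=> /exists_subset_card[X' sX' cX'] /exists_subset_card[Y' sY' cY'] dXY mX mY mXY.
exists X', Y', c; split; first by split; rewrite // (disjointW sX' sY').
by split; [apply: mono_in_subset mX | apply: mono_in_subset mY | apply: mono_between_subset mXY].
Qed.

Lemma outcome_ii_of_sets t (V1 V2 V3 V4 : {set 'I_n}) :
  t <= #|V1| -> t <= #|V2| -> t <= #|V3| -> t <= #|V4| ->
  [disjoint V1 & V2] -> [disjoint V1 & V3] -> [disjoint V1 & V4] ->
  [disjoint V2 & V3] -> [disjoint V2 & V4] -> [disjoint V3 & V4] ->
  mono_in col V1 true -> mono_in col V4 true -> mono_between col V1 V3 true ->
  mono_between col V1 V4 true -> mono_between col V2 V4 true ->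
  mono_in col V2 false -> mono_in col V3 false -> mono_between col V1 V2 false ->
  mono_between col V2 V3 false -> mono_between col V3 V4 false -> outcome_ii t col.
Proof.
move=> /exists_subset_card[W1 s1 c1] /exists_subset_card[W2 s2 c2].
move=> /exists_subset_card[W3 s3 c3] /exists_subset_card[W4 s4 c4] *.
exists W1, W2, W3, W4; do 4 (split; first by split;
  try (apply: disjointW; eassumption); try (apply: mono_in_subset; eassumption);
  try (apply: mono_between_subset; eassumption)).
by split; try (apply: mono_in_subset; eassumption); apply: mono_between_subset; eassumption.
Qed.

Ltac outcome_i_from_pair :=
  match goal with
  | mX : mono_in col ?X ?c, mY : mono_in col ?Y ?c, mXY : mono_between col ?X ?Y _ |- _ =>
    left; apply: (@outcome_i_of_sets _ X Y c); by [|exact mXY]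
  end.

(* Unless two of the four sets already form outcome (i), their inner colours
   alternate around A, P, B, Q, and the two remaining colourings are the two
   ways of arranging them as outcome (ii). *)
Lemma outcome_of_crossing_mono t (A B P Q : {set 'I_n}) cA cB cP cQ cAB cPQ :
  t <= #|A| -> t <= #|B| -> t <= #|P| -> t <= #|Q| ->
  [disjoint A & B] -> [disjoint A & P] -> [disjoint A & Q] ->
  [disjoint B & P] -> [disjoint B & Q] -> [disjoint P & Q] ->
  mono_in col A cA -> mono_in col B cB -> mono_in col P cP -> mono_in col Q cQ ->
  mono_between col A P true -> mono_between col A Q false ->
  mono_between col B P false -> mono_between col B Q true ->
  mono_between col A B cAB -> mono_between col P Q cPQ ->
  outcome_i t col \/ outcome_ii t col.
Proof.
move=> sA sB sP sQ dAB dAP dAQ dBP dBQ dPQ.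
case: cA; case: cB; case: cP; case: cQ; case: cAB; case: cPQ => *;
  try solve [outcome_i_from_pair].
- right; apply: (outcome_ii_of_sets sA sQ sP sB) => //;
    first [by rewrite disjoint_sym | by apply: mono_between_sym].
- right; apply: (outcome_ii_of_sets sP sB sA sQ) => //;
    first [by rewrite disjoint_sym | by apply: mono_between_sym].
Qed.

Lemma outcome_of_crossing t (A B P Q : {set 'I_n}) cA cB cP cQ cAB cPQ : 0 < t ->
  t <= #|A| -> t <= #|B| -> t <= #|P| -> t <= #|Q| ->
  mono_in col A cA -> mono_in col B cB -> mono_in col P cP -> mono_in col Q cQ ->
  mono_between col A B cAB -> mono_between col P Q cPQ ->
  {in P & A, forall p a, p \in nbhd true a} -> {in P & B, forall p b, p \in nbhd false b} ->
  {in Q & B, forall q b, q \in nbhd true b} -> {in Q & A, forall q a, q \in nbhd false a} ->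
  outcome_i t col \/ outcome_ii t col.
Proof.
move=> t0 sA sB sP sQ mA mB mP mQ mAB mPQ PA PB QB QA.
have /card_gt0P[a aA] := leq_trans t0 sA.
have /card_gt0P[p pP] := leq_trans t0 sP.
apply: (outcome_of_crossing_mono sA sB sP sQ) mA mB mP mQ _ _ _ _ mAB mPQ.
- apply: disjoint_of_neq => a' b' a'A b'B.
  apply: contraTneq (col_nbhd (PA p a' pP a'A)) => ->.
  by rewrite (col_nbhd (PB p b' pP b'B)).
- by apply: disjoint_of_neq => a' p' a'A p'P; rewrite eq_sym (neq_nbhd (PA _ _ p'P a'A)).
- by apply: disjoint_of_neq => a' q' a'A q'Q; rewrite eq_sym (neq_nbhd (QA _ _ q'Q a'A)).
- by apply: disjoint_of_neq => b' p' b'B p'P; rewrite eq_sym (neq_nbhd (PB _ _ p'P b'B)).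
- by apply: disjoint_of_neq => b' q' b'B q'Q; rewrite eq_sym (neq_nbhd (QB _ _ q'Q b'B)).
- apply: disjoint_of_neq => p' q' p'P q'Q.
  apply: contraTneq (col_nbhd (PA p' a p'P aA)) => ->.
  by rewrite (col_nbhd (QA q' a q'Q aA)).
- by move=> a' p' a'A p'P; apply/col_nbhd/PA.
- by move=> a' q' a'A q'Q; apply/col_nbhd/QA.
- by move=> b' p' b'B p'P; apply/col_nbhd/PB.
- by move=> b' q' b'B q'Q; apply/col_nbhd/QB.
Qed.

Variable K : nat.
Hypothesis balanced : forall v c, n <= K * cdeg col c v.

Local Notation D := (4 * K ^ 2).

(* [codeg . a] sums to at least [n^2 / K^2] ([sum_codeg]), and vertices [b] of red
   degree at most that of [a] satisfy [codeg b a <= codeg a b] ([cdeg_codeg]). *)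
Lemma card_large_codeg a : 2 * K ^ 2 * #|[set b | cdeg col true a < cdeg col true b]| < n ->
  n <= D * #|[set b | (n <= D * codeg a b) && (n <= D * codeg b a)]|.
Proof.
set above := [set b | _] => few_above.
have n0 : 0 < n by apply: leq_ltn_trans few_above.
have codeg_le b : codeg b a <= n := leq_trans (max_card _) (eq_leq (card_ord n)).
have sum_all : n * n <= K ^ 2 * \sum_b codeg b a.
  have sum_deg : #|nbhd false a| * n <= K * \sum_(u in nbhd false a) cdeg col true u.
    by rewrite big_distrr -sum_nat_const; apply: leq_sum => u _; apply: balanced.
  have := leq_mul (balanced a false : n <= K * #|nbhd false a|) (leqnn n).
  by have := leq_mul (leqnn K) sum_deg; rewrite sum_codeg -mulnn; lia.
have sum_above : \sum_(b in above) codeg b a <= #|above| * n.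
  by rewrite -sum_nat_const; apply: leq_sum => b _.
have sum_rest : n * n <= 2 * K ^ 2 * \sum_(b in ~: above) codeg b a.
  have split_sum : \sum_b codeg b a = \sum_(b in above) codeg b a + \sum_(b in ~: above) codeg b a.
    by rewrite (bigID (mem above)) /=; congr (_ + _); apply: eq_bigl => b; rewrite !inE.
  move: sum_all; rewrite split_sum.
  have := leq_mul (leqnn (K ^ 2)) sum_above; have := leq_mul few_above (leqnn n).
  by set k := K ^ 2; lia.
have := @reverse_markov _ (~: above) (fun b => codeg b a) n (2 * K ^ 2) n n0.
move=> /(_ (fun b _ => codeg_le b) sum_rest); set H := [set b in _ | _] => bigH.
have sH : H \subset [set b | (n <= D * codeg a b) && (n <= D * codeg b a)].
  apply/subsetP => b; rewrite !inE -leqNgt => /andP[le_ba]; rewrite mulnA => le_n.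
  rewrite le_n andbT (leq_trans le_n) // leq_mul2l.
  by have := cdeg_codeg a b; lia.
apply: leq_trans (leq_mul (leqnn D) (subset_leq_card sH)).
have rest_le : #|~: above| <= n := leq_trans (max_card _) (eq_leq (card_ord n)).
lia.
Qed.

Hypothesis K_gt0 : 0 < K.
Variable s : nat.
Hypothesis s_gt0 : 0 < s.
Hypothesis big_n : 4 * D * (4 ^ s * 4 ^ s * 4 ^ s) <= n.

Lemma exists_mono_pair_large_codeg :
  exists (A B : {set 'I_n}) (cA cB cAB : bool),
    [/\ s <= 4 * D * #|A|, #|A| <= s & #|B| = s] /\
    [/\ mono_in col A cA, mono_in col B cB, mono_between col A B cAB &
        {in A & B, forall a b, n <= D * codeg a b /\ n <= D * codeg b a}].
Proof.
have K20 : 0 < K ^ 2 by rewrite expn_gt0 K_gt0.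
have big_n2 : 4 * D * (4 ^ s * 4 ^ s) <= n.
  by apply: leq_trans big_n; rewrite leq_mul2l leq_pmulr ?orbT ?expn_gt0.
pose good a b := (n <= D * codeg a b) && (n <= D * codeg b a).
set T := [set a | 2 * K ^ 2 * #|[set b | cdeg col true a < cdeg col true b]| < n].
have bigT : 4 ^ s <= #|T|.
  have K20' : 0 < 2 * K ^ 2 by rewrite muln_gt0.
  apply: (@leq_pmul_bound (2 * K ^ 2) _ _ n K20').
    by apply: leq_trans _ big_n2; have := leq_pmulr (K ^ 2 * 4 ^ s) (expn_gt0 4 s); lia.
  by have := card_few_above (fun a => cdeg col true a) K20'; rewrite card_ord.
have [A0 [cA [sA0T cardA0 monoA0]]] := ramsey bigT.
have A00 : 0 < #|A0| by rewrite cardA0.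
have /card_gt0P[a0 a0A0] := A00.
(* With a singleton as second family, [common_nbhd] is plain averaging over [A0]. *)
have goodA0 : {in A0 & [set a0], forall a _, #|'I_n| <= D * #|[set b | good a b] :&: setT|}.
  move=> a _ aA0 _; rewrite card_ord setIT; apply: card_large_codeg.
  by move: (subsetP sA0T a aA0); rewrite inE.
have a00 : 0 < #|[set a0]| by rewrite cards1.
have [Bc [G [_ [[sGA0 _ bigG _] [bigBc [goodGBc _]]]]]] := common_nbhd A00 a00 goodA0.
move: bigG bigBc; rewrite card_ord cards1 expn1 cardA0 => bigG bigBc.
have [A [Bc' [cAB [sAG sBc' bigA bigBc' monoABc']]]] := exists_mono_rectangle col G Bc.
have leG : 2 ^ #|G| <= 2 ^ s by rewrite leq_pexp2l // -cardA0 subset_leq_card.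
have bigBc'' : 4 ^ s <= #|Bc'|.
  have pos : 0 < 4 * D * 4 ^ s by rewrite !muln_gt0 expn_gt0 K_gt0.
  apply: (@leq_pmul_bound _ _ _ n pos); first by rewrite -mulnA.
  have := leq_mul (leqnn (D * 2 ^ s)) (leq_trans bigBc' (leq_mul leG (leqnn #|Bc'|))).
  by move: bigBc; rewrite -[4]/(2 * 2) expnMn; set x := #|Bc|; set y := #|Bc'|; lia.
have [B [cB [sBBc' cardB monoB]]] := ramsey bigBc''.
have sAA0 : A \subset A0 := subset_trans sAG sGA0.
exists A, B, cA, cB, cAB; split; split.
- by move: bigG (leq_mul (leqnn (2 * D)) bigA); set g := #|G|; set a := #|A|; lia.
- by rewrite -cardA0 subset_leq_card.
- exact: cardB.
- exact: mono_in_subset sAA0 monoA0.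
- exact: monoB.
- exact: mono_between_subset (subxx A) sBBc' monoABc'.
move=> a b aA bB.
have := goodGBc b a (subsetP sBc' b (subsetP sBBc' b bB)) (subsetP sAG a aA).
by rewrite inE => /andP.
Qed.

Lemma exists_crossing_sets (A B : {set 'I_n}) : 0 < #|A| <= s -> 0 < #|B| <= s ->
  {in A & B, forall a b, n <= D * codeg a b /\ n <= D * codeg b a} ->
  exists (A' B' P Q : {set 'I_n}),
    [/\ A' \subset A, B' \subset B, #|A| <= 2 * D * (2 * D * #|A'|)
      & #|B| <= 2 * D * (2 * D * #|B'|)] /\
    (4 ^ s <= #|P| /\ 4 ^ s * 4 ^ s <= #|Q|) /\
    [/\ {in P & A', forall p a, p \in nbhd true a}, {in P & B', forall p b, p \in nbhd false b},
        {in Q & B', forall q b, q \in nbhd true b} & {in Q & A', forall q a, q \in nbhd false a}].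
Proof.
move=> /andP[A0 leA] /andP[B0 leB] codegAB.
have e0 : 0 < 4 ^ s by rewrite expn_gt0.
have a0 : 0 < 2 * D * 4 ^ s by rewrite !muln_gt0 e0 K_gt0.
have bigQn : 2 * D * 4 ^ s * (4 ^ s * 4 ^ s) <= n.
  by apply: leq_trans big_n; set e := 4 ^ s; nia.
have bigPn : 2 * D * 4 ^ s * 4 ^ s <= n.
  by apply: leq_trans bigQn; set e := 4 ^ s; nia.
have large (Z X Y : {set 'I_n}) m : #|X| <= s -> #|Y| <= s -> 2 * D * 4 ^ s * m <= n ->
    #|'I_n| <= 2 * D * (2 ^ #|X| * 2 ^ #|Y| * #|Z|) -> m <= #|Z|.
  move=> leX leY le_m; rewrite card_ord => le_Z; apply: leq_pmul_bound a0 le_m _.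
  apply: leq_trans le_Z _; rewrite -[X in _ <= X]mulnA leq_mul2l leq_mul2r -[4]/(2 * 2) expnMn.
  by rewrite leq_mul ?leq_pexp2l ?orbT.
have codeg1 : {in A & B, forall a b, #|'I_n| <= D * #|nbhd true a :&: nbhd false b|}.
  by move=> a b aA bB; rewrite card_ord; case: (codegAB a b aA bB).
have [P [A1 [B1 [[sA1 sB1 bigA1 bigB1] [bigP [PA1 PB1]]]]]] := common_nbhd A0 B0 codeg1.
have A10 : 0 < #|A1| by move: A0 bigA1; set x := #|A|; set y := #|A1|; nia.
have B10 : 0 < #|B1| by move: B0 bigB1; set x := #|B|; set y := #|B1|; nia.
have codeg2 : {in B1 & A1, forall b a, #|'I_n| <= D * #|nbhd true b :&: nbhd false a|}.
  move=> b a bB1 aA1; rewrite card_ord.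
  by case: (codegAB a b (subsetP sA1 a aA1) (subsetP sB1 b bB1)).
have [Q [B' [A' [[sB' sA' bigB' bigA'] [bigQ [QB' QA']]]]]] := common_nbhd B10 A10 codeg2.
have leA1 : #|A1| <= s := leq_trans (subset_leq_card sA1) leA.
have leB1 : #|B1| <= s := leq_trans (subset_leq_card sB1) leB.
exists A', B', P, Q; split; [split | split; split].
- exact: subset_trans sA' sA1.
- exact: subset_trans sB' sB1.
- by move: bigA1 (leq_mul (leqnn (2 * D)) bigA'); set x := #|A|; set y := #|A1|; lia.
- by move: bigB1 (leq_mul (leqnn (2 * D)) bigB'); set x := #|B|; set y := #|B1|; lia.
- exact: large leA leB bigPn bigP.
- exact: large leB1 leA1 bigQn bigQ.
- by move=> p a pP aA'; apply: PA1 => //; apply: (subsetP sA').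
- by move=> p b pP bB'; apply: PB1 => //; apply: (subsetP sB').
- exact: QB'.
- exact: QA'.
Qed.

Lemma exists_mono_pair_between (P Q : {set 'I_n}) :
  4 ^ s <= #|P| -> 4 ^ s * 4 ^ s <= #|Q| ->
  exists (P' Q' : {set 'I_n}) (cP cQ cPQ : bool),
    [/\ P' \subset P, Q' \subset Q, s <= 2 * #|P'| & #|Q'| = s] /\
    [/\ mono_in col P' cP, mono_in col Q' cQ & mono_between col P' Q' cPQ].
Proof.
move=> bigP bigQ.
have [P0 [cP [sP0 cardP0 monoP0]]] := ramsey bigP.
have [P' [Q1 [cPQ [sP' sQ1 bigP' bigQ1 monoPQ1]]]] := exists_mono_rectangle col P0 Q.
have bigQ1' : 4 ^ s <= #|Q1|.
  apply: (@leq_pmul_bound (4 ^ s) _ _ #|Q|); rewrite ?expn_gt0 //.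
  apply: leq_trans bigQ1 _; rewrite leq_mul2r cardP0 -[4]/(2 * 2) expnMn.
  by rewrite leq_pmulr ?expn_gt0 ?orbT.
have [Q' [cQ [sQ' cardQ' monoQ']]] := ramsey bigQ1'.
exists P', Q', cP, cQ, cPQ; split; split.
- exact: subset_trans sP' sP0.
- exact: subset_trans sQ' sQ1.
- by rewrite -cardP0.
- exact: cardQ'.
- exact: mono_in_subset sP' monoP0.
- exact: monoQ'.
- exact: mono_between_subset (subxx _) sQ' monoPQ1.
Qed.

Lemma outcome_of_large t : 0 < t -> s = 1024 * K ^ 6 * t -> outcome_i t col \/ outcome_ii t col.
Proof.
move=> t0 def_s; have k0 : 0 < K ^ 2 by rewrite expn_gt0 K_gt0.
have K6 : K ^ 6 = K ^ 2 * K ^ 2 * K ^ 2 by rewrite -!expnD.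
have le_s m : s <= 1024 * K ^ 6 * m -> t <= m.
  by rewrite def_s leq_pmul2l // muln_gt0 expn_gt0 K_gt0.
have [A [B [cA [cB [cAB [[bigA leA cardB] [mA mB mAB codegAB]]]]]]] :=
  exists_mono_pair_large_codeg.
have A0 : 0 < #|A| <= s.
  rewrite leA andbT lt0n; apply: contraTneq s_gt0 => A_0.
  by rewrite -leqNgt (leq_trans bigA) // A_0 muln0.
have B0 : 0 < #|B| <= s by rewrite cardB s_gt0 leqnn.
have [A' [B' [P [Q [[sA' sB' bigA' bigB'] [[bigP bigQ] [PA PB QB QA]]]]]]] :=
  exists_crossing_sets A0 B0 codegAB.
have [P' [Q' [cP [cQ [cPQ [[sP' sQ' bigP' cardQ'] [mP' mQ' mPQ']]]]]]] :=
  exists_mono_pair_between bigP bigQ.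
apply: (outcome_of_crossing t0 _ _ _ _ (mono_in_subset sA' mA) (mono_in_subset sB' mB)
  mP' mQ' (mono_between_subset sA' sB' mAB) mPQ').
- apply: le_s; move: bigA (leq_mul (leqnn (4 * D)) bigA').
  by rewrite K6; set x := #|A|; set y := #|A'|; nia.
- apply: le_s; move: bigB'; rewrite cardB K6; have := leq_pmulr (K ^ 2 * K ^ 2 * #|B'|) k0.
  by set y := #|B'|; nia.
- apply: le_s; apply: leq_trans bigP' _.
  by rewrite leq_mul2r (leq_trans _ (leq_pmulr 1024 _)) ?orbT // expn_gt0 K_gt0.
- by apply: le_s; rewrite cardQ' leq_pmull // muln_gt0 expn_gt0 K_gt0.
- by move=> p a pP' aA'; apply: PA; [apply: (subsetP sP') | ].
- by move=> p b pP' bB'; apply: PB; [apply: (subsetP sP') | ].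
- by move=> q b qQ' bB'; apply: QB; [apply: (subsetP sQ') | ].
- by move=> q a qQ' aA'; apply: QA; [apply: (subsetP sQ') | ].
Qed.

End Colouring.

Theorem outcome_of_balanced n (col : 'I_n -> 'I_n -> bool) K t : colouring_sym col ->
  (forall v c, n <= K * cdeg col c v) -> 0 < K -> 0 < t ->
  2 ^ (7 * (1024 * K ^ 6 * t)) <= n -> outcome_i t col \/ outcome_ii t col.
Proof.
move=> col_sym balanced K0 t0 big_n; set s := 1024 * K ^ 6 * t.
have s0 : 0 < s by rewrite /s muln_gt0 t0 andbT muln_gt0 expn_gt0 K0.
apply: (outcome_of_large col_sym balanced K0 s0 (leq_trans (exp_budget _) big_n) t0) => //.
have : K ^ 2 <= K ^ 6 by rewrite leq_pexp2l.
by rewrite /s; have := leq_pmulr (K ^ 6) t0; nia.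
Qed.


Lemma INR_expn a m : INR (a ^ m) = (INR a ^ m)%R.
Proof. by elim: m => [|m IH] //; rewrite expnS mult_INR IH. Qed.

Lemma balanced_lt1 n (col : 'I_n -> 'I_n -> bool) eps :
  0 < n -> locally_balanced col eps -> (eps < 1)%R.
Proof.
move=> n0 bal; pose v := Ordinal n0.
have lt_deg : cdeg col true v < n.
  apply: leq_trans (_ : #|[set~ v]| < n); last by rewrite cardsC1 card_ord prednK.
  by rewrite ltnS subset_leq_card //; apply/subsetP => u; rewrite !inE => /andP[].
have [+ _] := bal v; have := lt_INR _ _ (ltP lt_deg); have := lt_0_INR _ (ltP n0).
nra.
Qed.

Lemma balanced_nat n (col : 'I_n -> 'I_n -> bool) eps K :
  locally_balanced col eps -> (1 <= eps * INR K)%R -> forall v c, n <= K * cdeg col c v.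
Proof.
move=> bal epsK v c; apply/leP/INR_le; rewrite mult_INR.
have : (eps * INR n <= INR (cdeg col c v))%R by case: c; case: (bal v).
have := pos_INR n; have := pos_INR K; have := pos_INR (cdeg col c v).
nra.
Qed.

Lemma exists_nat_inv eps : (0 < eps < 1)%R ->
  exists2 K : nat, (1 <= eps * INR K)%R & (eps * INR K <= 2)%R.
Proof.
move=> eps01; have [up_gt up_le] := archimed (/ eps).
have up_ge0 : (0 <= up (/ eps))%Z.
  apply: le_IZR; have : (0 < / eps)%R by apply: Rinv_0_lt_compat; lra.
  lra.
exists (Z.to_nat (up (/ eps))); rewrite INR_IZR_INZ Z2Nat.id //.
- have := Rmult_lt_compat_l eps _ _ (proj1 eps01) up_gt.
  by rewrite Rinv_r; lra.
- have := Rmult_le_compat_l eps _ _ (Rlt_le _ _ (proj1 eps01)) up_le.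
  by rewrite Rmult_minus_distr_l Rinv_r; lra.
Qed.

(* [458752 = 7 * 1024 * 2 ^ 6], as [K ^ 6 <= 2 ^ 6 / eps ^ 6 <= 2 ^ 6 / eps ^ 16]. *)
Lemma pow2_le_of_Rpower eps K t n : (0 < eps < 1)%R -> (eps * INR K <= 2)%R ->
  (Rpower 2 (458752 * INR t / eps ^ 16) <= INR n)%R -> 2 ^ (7 * (1024 * K ^ 6 * t)) <= n.
Proof.
move=> eps01 epsK le_n; apply/leP/INR_le; apply: Rle_trans le_n.
rewrite INR_expn -Rpower_pow /=; last lra.
apply: Rle_Rpower; first lra.
have K6 : (INR K ^ 6 * eps ^ 16 <= 64)%R.
  have := pow_incr (eps * INR K) 2 6; have := pow_incr eps 1 10.
  rewrite pow1 -[(eps ^ 16)%R]/(eps ^ (6 + 10))%R pow_add Rpow_mult_distr.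
  have := pos_INR K; have := pow_le eps 6; have := pow_le eps 10; have := pow_le (INR K) 6.
  nra.
have e16 : (0 < eps ^ 16)%R by apply: pow_lt; lra.
apply: (Rmult_le_reg_r _ _ _ e16); rewrite /Rdiv Rmult_assoc Rinv_l ?Rmult_1_r; last lra.
rewrite (mult_INR 7) (mult_INR (1024 * K ^ 6)) (mult_INR 1024) INR_expn.
rewrite (INR_IZR_INZ 7) (INR_IZR_INZ 1024) /=.
by have := pos_INR t; nra.
Qed.

Theorem theorem1p4 :
  exists C : R, (0 < C)%R /\
    forall (eps : R) (t n : nat),
      (0 < eps)%R -> (1 <= t)%N ->
      (Rpower 2 (C * INR t / eps ^ 16) <= INR n)%R ->
      forall col : 'I_n -> 'I_n -> bool,
        colouring_sym col ->
        locally_balanced col eps ->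
        outcome_i t col \/ outcome_ii t col.
Proof.
exists 458752%R; split; first lra.
move=> eps t n eps0 t1 big_n col col_sym bal.
have n0 : 0 < n.
  apply/ltP/INR_lt; apply: Rlt_le_trans big_n; rewrite /=; exact: exp_pos.
have eps1 := balanced_lt1 n0 bal.
have [K le1K leK2] := exists_nat_inv (conj eps0 eps1).
have K0 : 0 < K by apply/ltP/INR_lt; rewrite /=; nra.
apply: (outcome_of_balanced col_sym (balanced_nat bal le1K) K0 t1).
exact: pow2_le_of_Rpower (conj eps0 eps1) leK2 big_n.
Qed.
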